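(* Let $n$ and $m$ be integers with $n\geq 5$ and $m\geq 5$. For each $G\in T_{n,m}$ whose terminals $s$ and $t$ are true twins and which has at least one $3$-irrelevant edge, there exists $H\in T_{n,m}^*$ that is $3$-stronger than $G$.
   Context: All graphs are finite, simple and undirected. A two-terminal graph is a graph $G$ together with two distinguished vertices $s,t$ (the terminals). $T_{n,m}$ denotes the set of all pairwise nonisomorphic (with isomorphisms preserving the set of terminals) two-terminal graphs with $n$ vertices and $m$ edges. Two vertices $u,v$ are true twins if $N[u]=N[v]$ (closed neighborhoods). For a positive integer $d$, a $d$-pathset of a two-terminal graph $G$ is a spanning subgraph of $G$ containing a path of length (number of edges) at most $d$ joining $s$ and $t$; $N_i^d(G)$ is the number of $d$-pathsets of $G$ with exactly $i$ edges. An edge $e$ of $G$ is $d$-irrelevant if for every $d$-pathset $H$ of $G$ containing $e$, $H-e$ is also a $d$-pathset. $T_{n,m}^*$ is the set of graphs in $T_{n,m}$ with no $3$-irrelevant edges whose terminals are true twins. For $G,H\in T_{n,m}$, $H$ is $d$-stronger than $G$ if $N_i^d(H)\geq N_i^d(G)$ for every $i\in\{1,\ldots,m\}$ and $N_j^d(H)>N_j^d(G)$ for some $j\in\{1,\ldots,m\}$. *)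

From mathcomp Require Import all_boot.
Set Implicit Arguments. Unset Strict Implicit. Unset Printing Implicit Defensive.

Definition simple_graph (n : nat) (E : {set {set 'I_n}}) : bool :=
  [forall e in E, #|e| == 2].

Definition two_terminal (n : nat) (E : {set {set 'I_n}}) (s t : 'I_n) : bool :=
  simple_graph E && (s != t).

Definition adj (n : nat) (E : {set {set 'I_n}}) : rel 'I_n :=
  fun u v => [set u; v] \in E.

(* F contains a path (no repeated vertices) from s to t with at most d edges;
   the path is s :: p, its length is size p. *)
Definition is_st_path (n : nat) (F : {set {set 'I_n}}) (s t : 'I_n) (p : seq 'I_n) : bool :=
  [&& path (adj F) s p, uniq (s :: p) & last s p == t].

Definition has_short_path (n : nat) (d : nat) (F : {set {set 'I_n}}) (s t : 'I_n) : bool :=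
  [exists k : 'I_d.+1, [exists p : k.-tuple 'I_n, is_st_path F s t p]].

(* a d-pathset of (E,s,t): a spanning subgraph, i.e. an edge subset F of E,
   containing an s-t path of length at most d *)
Definition pathset (n d : nat) (E F : {set {set 'I_n}}) (s t : 'I_n) : Prop :=
  F \subset E /\ has_short_path d F s t.

Definition Ncount (n d : nat) (E : {set {set 'I_n}}) (s t : 'I_n) (i : nat) : nat :=
  #|[set F in powerset E | (#|F| == i) && has_short_path d F s t]|.

Definition irrelevant (n d : nat) (E : {set {set 'I_n}}) (s t : 'I_n) (e : {set 'I_n}) : Prop :=
  e \in E /\
  forall F : {set {set 'I_n}}, pathset d E F s t -> e \in F -> pathset d E (F :\ e) s t.

Definition closed_nbhd (n : nat) (E : {set {set 'I_n}}) (u : 'I_n) : {set 'I_n} :=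
  u |: [set v | adj E u v].

Definition true_twins (n : nat) (E : {set {set 'I_n}}) (u v : 'I_n) : Prop :=
  closed_nbhd E u = closed_nbhd E v.

Definition stronger (n d m : nat) (EH : {set {set 'I_n}}) (sH tH : 'I_n)
    (EG : {set {set 'I_n}}) (sG tG : 'I_n) : Prop :=
  (forall i, 1 <= i <= m -> Ncount d EG sG tG i <= Ncount d EH sH tH i) /\
  (exists j, 1 <= j <= m /\ Ncount d EG sG tG j < Ncount d EH sH tH j).

From mathcomp Require Import all_boot zify.
Set Implicit Arguments. Unset Strict Implicit. Unset Printing Implicit Defensive.

(* Let R = N[s] = N[t].  The inner vertices of an s-t path with at most 3 edges are
   neighbours of s or of t, so such a path stays inside R: the 3-irrelevant edges are
   exactly the outer edges, those not contained in R, and every edge inside R lies on a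
   short s-t path.  Given an outer edge g, pick v in g outside R.  If two vertices c1, c2
   of R \ {s,t} are non-adjacent, replace g by c1c2; otherwise replace g and a second
   edge h avoiding s and t by sv and vt, which keeps s and t twins with closed
   neighbourhood R + v.  Either move lowers the number of outer edges and is 3-stronger:
   a size-preserving injection of 3-pathsets, given with a left inverse, misses a small
   pathset of the new graph.  Iterating until no outer edge is left proves the theorem. *)

Section ShortPaths.
Variable n : nat.
Implicit Types (E F A : {set {set 'I_n}}) (s t u v x y : 'I_n) (e h : {set 'I_n}).

Lemma mem_closed_nbhd E u x : (x \in closed_nbhd E u) = (x == u) || ([set u; x] \in E).
Proof. by rewrite !inE. Qed.

Lemma closed_nbhdS E F u : F \subset E -> closed_nbhd F u \subset closed_nbhd E u.
Proof.
move=> sFE; apply/subsetP => x; rewrite !mem_closed_nbhd.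
by case/orP=> [-> // | /(subsetP sFE) ->]; rewrite orbT.
Qed.

Lemma closed_nbhdU1 E e u : u \notin e -> closed_nbhd (e |: E) u = closed_nbhd E u.
Proof.
move=> ue; apply/setP => x; rewrite !mem_closed_nbhd in_setU1.
by have -> : ([set u; x] == e) = false by apply: contraNF ue => /eqP <-; rewrite set21.
Qed.

Lemma closed_nbhdD1 E e u : u \notin e -> closed_nbhd (E :\ e) u = closed_nbhd E u.
Proof.
move=> ue; apply/setP => x; rewrite !mem_closed_nbhd in_setD1.
by have -> : ([set u; x] != e) by apply: contraNneq ue => <-; rewrite set21.
Qed.

Lemma closed_nbhd_edgeU1 E u v : closed_nbhd ([set u; v] |: E) u = v |: closed_nbhd E u.
Proof.
apply/setP => x; rewrite [in RHS]in_setU1 !mem_closed_nbhd in_setU1.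
case: (eqVneq x u) => [-> | xu] /=; first by rewrite orbT.
congr (_ || _); apply/eqP/eqP => [e | -> //].
have /set2P [xu' | //] : x \in [set u; v] by rewrite -e set22.
by rewrite xu' eqxx in xu.
Qed.

Lemma edge_sub_closed_nbhd E e u :
  simple_graph E -> e \in E -> u \in e -> e \subset closed_nbhd E u.
Proof.
move=> /forallP /(_ e) /implyP sE eE; have /cards2P [x [y [_ exy]]] := sE eE; subst e.
rewrite subUset !sub1set !mem_closed_nbhd => /set2P [] ->.
  by rewrite eqxx eE orbT.
by rewrite eqxx setUC eE orbT.
Qed.

Lemma has_short_path_sub d F F' s t :
  F \subset F' -> has_short_path d F s t -> has_short_path d F' s t.
Proof.
move=> sFF' /existsP [k /existsP [p /and3P [pth up lp]]].
apply/existsP; exists k; apply/existsP; exists p; rewrite /is_st_path up lp !andbT.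
by apply: sub_path pth => u v; apply: (subsetP sFF').
Qed.

Lemma st_path_has_short_path d F s t (p : seq 'I_n) :
  size p <= d -> is_st_path F s t p -> has_short_path d F s t.
Proof.
move=> hp pth; apply/existsP; exists (Ordinal (hp : size p < d.+1)).
by apply/existsP; exists (in_tuple p).
Qed.

(* A path of length at most 3 is s, x, y, t, where x = s or y = t for shorter paths. *)
Lemma short_path3P F s t : s != t ->
  reflect (exists x y, [/\ x \in closed_nbhd F s, [set x; y] \in F, y \in closed_nbhd F t
                          & [&& x != y, x != t & y != s]])
          (has_short_path 3 F s t).
Proof.
move=> st; apply: (iffP idP) => [/existsP [[k hk] /existsP [[p /= /eqP sz]]] | [x [y [hx hxy hy]]]].
  rewrite /is_st_path /adj; case: p sz => [|x [|y [|z [|w p]]]] //= sz.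
  - by rewrite (negbTE st).
  - case/and3P => /andP [hst _] _ /eqP ?; subst x.
    by exists s, t; rewrite !mem_closed_nbhd !eqxx st eq_sym st.
  - rewrite !inE !andbT !negb_or.
    case/and3P => /andP [hsx hxy] /andP [/andP [sx sy] xy] /eqP ?; subst y.
    exists s, x; split; rewrite ?mem_closed_nbhd ?eqxx //.
      by rewrite setUC hxy orbT.
    by rewrite sx sy eq_sym sx.
  - rewrite !inE !andbT !negb_or.
    case/and3P => /and3P [hsx hxy hyz] /and3P [/and3P [sx sy sz'] /andP [xy xz] yz] /eqP ?; subst z.
    exists x, y; split; rewrite ?mem_closed_nbhd ?hsx ?orbT //.
      by rewrite setUC hyz orbT.
    by rewrite xy xz eq_sym sy.
  - by rewrite -sz in hk.
case/and3P => xy xt ys.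
have sx : x != s -> [set s; x] \in F by move=> xs; move: hx; rewrite mem_closed_nbhd (negbTE xs).
have ty : y != t -> [set y; t] \in F.
  by move=> yt; move: hy; rewrite mem_closed_nbhd (negbTE yt) setUC.
case: (eqVneq x s) => [? | xs]; case: (eqVneq y t) => [? | yt]; subst.
- apply: (@st_path_has_short_path _ _ _ _ [:: t]) => //.
  by rewrite /is_st_path /= /adj hxy !inE st eqxx.
- apply: (@st_path_has_short_path _ _ _ _ [:: y; t]) => //.
  by rewrite /is_st_path /= /adj hxy (ty yt) !inE negb_or yt eq_sym ys st eqxx.
- apply: (@st_path_has_short_path _ _ _ _ [:: x; t]) => //.
  by rewrite /is_st_path /= /adj (sx xs) hxy !inE negb_or xt eq_sym xs st eqxx.
- apply: (@st_path_has_short_path _ _ _ _ [:: x; y; t]) => //.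
  rewrite /is_st_path /= /adj (sx xs) hxy (ty yt) !inE !negb_or xy xt yt eqxx.
  by rewrite eq_sym xs eq_sym ys st.
Qed.

Lemma short_path_via F s t u : s != t -> u != s -> u != t ->
  [set s; u] \in F -> [set u; t] \in F -> has_short_path 3 F s t.
Proof.
move=> st us ut suF utF; apply/short_path3P => //; exists s, u.
by rewrite !mem_closed_nbhd eqxx suF (setUC [set t]) utF orbT eq_sym us st.
Qed.

Lemma no_short_path_to_isolated F s t :
  s != t -> {in F, forall e, t \notin e} -> ~~ has_short_path 3 F s t.
Proof.
move=> st isol; apply/negP => /short_path3P [//| x [y [_ hxy]]]; rewrite mem_closed_nbhd.
case/orP => [/eqP eyt | hty] _; first by have := isol _ hxy; rewrite eyt set22.
by have := isol _ hty; rewrite set21.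
Qed.

Lemma two_edges_no_short_path s t x y : s != y -> s != t -> x != y -> x != t ->
  ~~ has_short_path 3 [set [set s; x]; [set y; t]] s t.
Proof.
move=> sy st xy xt; apply/negP => /short_path3P [//| x' [y' [hx hxy hy _]]].
have dis z : z \in [set s; x] -> z \in [set y; t] -> False.
  by rewrite !inE => /orP [] /eqP ->;
    rewrite ?(negbTE sy) ?(negbTE st) ?(negbTE xy) ?(negbTE xt).
have hx' : x' \in [set s; x].
  move: hx; rewrite mem_closed_nbhd => /orP [/eqP -> | ]; first exact: set21.
  case/set2P => e; first by rewrite -e set22.
  by case: (dis s (set21 s x)); rewrite -e set21.
have hy' : y' \in [set y; t].
  move: hy; rewrite mem_closed_nbhd => /orP [/eqP -> | ]; first exact: set22.
  case/set2P => e; last by rewrite -e set22.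
  by case: (dis t _ (set22 y t)); rewrite -e set21.
case/set2P: hxy => e.
- by apply: (dis y' _ hy'); rewrite -e set22.
- by apply: (dis x' hx'); rewrite -e set21.
Qed.

Lemma short_path_through_new_edge F h s t : s != t -> s \notin h -> t \notin h ->
  ~~ has_short_path 3 F s t -> has_short_path 3 (h |: F) s t ->
  exists x y, [/\ h = [set x; y], x != y, [set s; x] \in F & [set y; t] \in F].
Proof.
move=> st sh th nF /short_path3P [//| x [y [hx hxy hy xyts]]].
rewrite closed_nbhdU1 // in hx; rewrite closed_nbhdU1 // in hy.
case/setU1P: hxy => [hxy_h | hxy]; last by case/negP: nF; apply/short_path3P => //; exists x, y.
have xh : x \in h by rewrite -hxy_h set21.
have yh : y \in h by rewrite -hxy_h set22.
case/and3P: xyts => xy _ _; exists x, y; split => //.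
- by move: hx; rewrite mem_closed_nbhd => /orP [/eqP exs | //]; rewrite -exs xh in sh.
- move: hy; rewrite mem_closed_nbhd (setUC [set t]) => /orP [/eqP eyt | //].
  by rewrite -eyt yh in th.
Qed.

End ShortPaths.

Section Counting.
Variables (n d : nat) (E E' : {set {set 'I_n}}) (s t : 'I_n).
Variables psi phi : {set {set 'I_n}} -> {set {set 'I_n}}.
Hypothesis psiP : forall F, pathset d E F s t ->
  [/\ pathset d E' (psi F) s t, #|psi F| = #|F| & phi (psi F) = F].

Let pathsets X i := [set F in powerset X | (#|F| == i) && has_short_path d F s t].

Let mem_pathsets X i F : reflect (pathset d X F s t /\ #|F| = i) (F \in pathsets X i).
Proof. by rewrite !inE; apply: (iffP and3P) => [[? /eqP ? ?] | [[? ?] /eqP ?]]. Qed.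

Let psi_pathsets i : psi @: pathsets E i \subset pathsets E' i.
Proof.
apply/subsetP => _ /imsetP [F /mem_pathsets [pF <-] ->].
by have [pF' cF _] := psiP pF; apply/mem_pathsets.
Qed.

Let card_psi_pathsets i : #|psi @: pathsets E i| = #|pathsets E i|.
Proof.
apply: card_in_imset => F1 F2 /mem_pathsets [p1 _] /mem_pathsets [p2 _] e.
by have [_ _ <-] := psiP p1; have [_ _ <-] := psiP p2; rewrite e.
Qed.

Lemma Ncount_le_of_cancel i : Ncount d E s t i <= Ncount d E' s t i.
Proof. by rewrite /Ncount -card_psi_pathsets subset_leq_card ?psi_pathsets. Qed.

Lemma Ncount_lt_of_cancel F0 : pathset d E' F0 s t -> ~ pathset d E (phi F0) s t ->
  Ncount d E s t #|F0| < Ncount d E' s t #|F0|.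
Proof.
move=> pF0 npF0; rewrite /Ncount -card_psi_pathsets; apply: proper_card.
apply/properP; split; first exact: psi_pathsets.
exists F0; first exact/mem_pathsets.
apply/imsetP => -[F /mem_pathsets [pF _] eF0].
by have [_ _ eF] := psiP pF; rewrite eF0 eF in npF0.
Qed.

Lemma stronger_of_cancel m F0 : pathset d E' F0 s t -> ~ pathset d E (phi F0) s t ->
  0 < #|F0| <= m -> stronger d m E' s t E s t.
Proof.
move=> pF0 npF0 hF0; split=> [i _ | ]; first exact: Ncount_le_of_cancel.
by exists #|F0|; split=> //; apply: Ncount_lt_of_cancel.
Qed.

End Counting.

Lemma stronger_trans n d m (E1 E2 E3 : {set {set 'I_n}}) (s1 t1 s2 t2 s3 t3 : 'I_n) :
  stronger d m E3 s3 t3 E2 s2 t2 -> stronger d m E2 s2 t2 E1 s1 t1 ->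
  stronger d m E3 s3 t3 E1 s1 t1.
Proof.
move=> [le32 _] [le21 [j [hj lt21]]]; split=> [i hi | ].
- exact: leq_trans (le21 i hi) (le32 i hi).
- by exists j; split=> //; apply: leq_trans lt21 (le32 j hj).
Qed.

Definition outer_edges (n : nat) (E : {set {set 'I_n}}) (s : 'I_n) : {set {set 'I_n}} :=
  [set e in E | ~~ (e \subset closed_nbhd E s)].

Section Twins.
Variables (n : nat) (E : {set {set 'I_n}}) (s t : 'I_n).
Hypotheses (tt : two_terminal E s t) (tw : true_twins E s t).
Implicit Types (F : {set {set 'I_n}}) (u x y : 'I_n) (e g : {set 'I_n}).
Local Notation R := (closed_nbhd E s).

Let st : s != t. Proof. by case/andP: tt. Qed.

Lemma source_in_nbhd : s \in R.
Proof. by rewrite mem_closed_nbhd eqxx. Qed.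

Lemma target_in_nbhd : t \in R.
Proof. by rewrite tw mem_closed_nbhd eqxx. Qed.

Lemma source_edge x : x \in R -> x != s -> [set s; x] \in E.
Proof. by rewrite mem_closed_nbhd => /orP [/eqP -> | //]; rewrite eqxx. Qed.

Lemma target_edge x : x \in R -> x != t -> [set x; t] \in E.
Proof. by rewrite tw mem_closed_nbhd setUC => /orP [/eqP -> | //]; rewrite eqxx. Qed.

Let inside_closed_nbhd F u x : u \in R -> x \in R -> x \in closed_nbhd F u ->
  x \in closed_nbhd [set e in F | e \subset R] u.
Proof.
move=> uR xR; rewrite !mem_closed_nbhd => /orP [-> // | ux].
by rewrite inE ux subUset !sub1set uR xR orbT.
Qed.

Lemma short_path_inside F : F \subset E -> has_short_path 3 F s t ->
  has_short_path 3 [set e in F | e \subset R] s t.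
Proof.
move=> sFE /short_path3P [// | x [y [hx hxy hy xyts]]].
have xR : x \in R := subsetP (closed_nbhdS s sFE) x hx.
have yR : y \in R by rewrite tw; apply: (subsetP (closed_nbhdS t sFE)).
apply/short_path3P => //; exists x, y; split=> //.
- exact: inside_closed_nbhd source_in_nbhd xR hx.
- by rewrite inE hxy subUset !sub1set xR yR.
- exact: inside_closed_nbhd target_in_nbhd yR hy.
Qed.

Lemma outer_edge_removable F g : F \subset E -> ~~ (g \subset R) ->
  has_short_path 3 F s t -> has_short_path 3 (F :\ g) s t.
Proof.
move=> sFE gR /(short_path_inside sFE); apply: has_short_path_sub.
apply/subsetP => e; rewrite !inE => /andP [eF eR]; rewrite eF andbT.
by apply: contraNneq gR => <-.
Qed.

Lemma inside_edge_relevant x y : x \in R -> y \in R -> x != y -> x != t -> y != s ->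
  [set x; y] \in E -> ~ irrelevant 3 E s t [set x; y].
Proof.
move=> xR yR xy xt ys xyE [_ irr].
pose P := [set [set s; x]; [set x; y]; [set y; t]] :&: E.
have xyP : [set x; y] \in P by rewrite !inE eqxx xyE orbT.
have hP : has_short_path 3 P s t.
  apply/short_path3P => //; exists x, y; split; rewrite ?xy ?xt ?ys //.
  - rewrite mem_closed_nbhd; case: eqVneq => //= xs.
    by rewrite !inE eqxx source_edge.
  - rewrite mem_closed_nbhd setUC; case: eqVneq => //= yt.
    by rewrite !inE eqxx target_edge ?orbT.
have [_] := irr P (conj (subsetIr _ _) hP) xyP; apply/negP.
have sy : s != y by rewrite eq_sym.
apply: contraNN (two_edges_no_short_path sy st xy xt); apply: has_short_path_sub.
apply/subsetP => e; rewrite !inE => /and3P [exy].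
by rewrite (negbTE exy) orbF.
Qed.

Lemma irrelevant_outer e : irrelevant 3 E s t e -> e \in outer_edges E s.
Proof.
move=> irr; have [eE _] := irr; rewrite inE eE; apply/negP => eR.
have /cards2P [x [y [xy exy]]] : #|e| == 2 by case/andP: tt => /forallP /(_ e); rewrite eE.
subst e; move: eR; rewrite subUset !sub1set => /andP [xR yR].
have [/andP [xt ys] | ] := boolP ((x != t) && (y != s)).
  exact: inside_edge_relevant irr.
rewrite negb_and !negbK setUC in irr * => xtys.
apply: (inside_edge_relevant yR xR) irr; rewrite 1?setUC 1?eq_sym //.
- by case/orP: xtys => /eqP e; rewrite -?e // e eq_sym.
- by case/orP: xtys => /eqP e; rewrite ?e // -e eq_sym.
Qed.

Lemma outer_edge_avoids_terminals g : g \in outer_edges E s -> (s \notin g) && (t \notin g).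
Proof.
case/andP: tt; rewrite inE => sE _ /andP [gE gR]; apply/andP; split.
- by apply: contra gR; apply: edge_sub_closed_nbhd.
- by rewrite tw in gR; apply: contra gR; apply: edge_sub_closed_nbhd.
Qed.

End Twins.

Definition twin_graph (n m : nat) (E : {set {set 'I_n}}) (s t : 'I_n) : Prop :=
  [/\ two_terminal E s t, #|E| = m & true_twins E s t].

Definition outer_reduction (n m : nat) (E : {set {set 'I_n}}) (s t : 'I_n) : Prop :=
  exists E' : {set {set 'I_n}}, [/\ twin_graph m E' s t,
    #|outer_edges E' s| < #|outer_edges E s| & stronger 3 m E' s t E s t].

Lemma simple_graphS n (E F : {set {set 'I_n}}) : F \subset E -> simple_graph E -> simple_graph F.
Proof.
move=> sFE /forallP sE; apply/forallP => e; apply/implyP => eF.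
exact: implyP (sE e) (subsetP sFE e eF).
Qed.

Lemma simple_graphU1 n (E : {set {set 'I_n}}) (x y : 'I_n) :
  x != y -> simple_graph E -> simple_graph ([set x; y] |: E).
Proof.
move=> xy /forallP sE; apply/forallP => e; apply/implyP => /setU1P [-> | eE].
  by rewrite cards2 xy.
exact: implyP (sE e) eE.
Qed.

Lemma cards3_le (T : finType) (x y z : T) : #|[set x; y; z]| <= 3.
Proof. by rewrite cardsU cards2 cards1; apply: leq_trans (leq_subr _ _) _; case: (x != y). Qed.

Lemma outer_edges_lt n (E E' : {set {set 'I_n}}) (s : 'I_n) (g : {set 'I_n}) :
  g \in outer_edges E s -> closed_nbhd E s \subset closed_nbhd E' s ->
  (forall e, e \in E' -> ~~ (e \subset closed_nbhd E' s) -> e \in E :\ g) ->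
  #|outer_edges E' s| < #|outer_edges E s|.
Proof.
move=> go sN sE'; rewrite (cardsD1 g (outer_edges E s)) go ltnS; apply: subset_leq_card.
apply/subsetP => e; rewrite inE => /andP [eE' eN']; have := sE' e eE' eN'.
rewrite !inE => /andP [-> ->] /=; apply: contra eN' => eN; exact: subset_trans eN sN.
Qed.

Section SwapIntoNbhd.
Variables (n m : nat) (E : {set {set 'I_n}}) (s t c1 c2 : 'I_n) (g : {set 'I_n}).
Hypotheses (twE : twin_graph m E s t) (hm : 3 <= m) (go : g \in outer_edges E s).
Local Notation R := (closed_nbhd E s).
Local Notation f := [set c1; c2].
Hypotheses (c1R : c1 \in R :\ s :\ t) (c2R : c2 \in R :\ s :\ t).
Hypotheses (c12 : c1 != c2) (fE : f \notin E).

Let tt : two_terminal E s t. Proof. by case: twE. Qed.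
Let tw : true_twins E s t. Proof. by case: twE. Qed.
Let st : s != t. Proof. by case/andP: tt. Qed.
Let gE : g \in E. Proof. by case/setIdP: go. Qed.
Let gR : ~~ (g \subset R). Proof. by case/setIdP: go. Qed.
Let sg : s \notin g. Proof. by case/andP: (outer_edge_avoids_terminals tt tw go). Qed.
Let tg : t \notin g. Proof. by case/andP: (outer_edge_avoids_terminals tt tw go). Qed.
Let c1t : c1 != t. Proof. by case/setD1P: c1R. Qed.
Let c2t : c2 != t. Proof. by case/setD1P: c2R. Qed.
Let c1s : c1 != s. Proof. by case/setD1P: c1R => _ /setD1P []. Qed.
Let c2s : c2 != s. Proof. by case/setD1P: c2R => _ /setD1P []. Qed.
Let c1R' : c1 \in R. Proof. by case/setD1P: c1R => _ /setD1P []. Qed.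
Let c2R' : c2 \in R. Proof. by case/setD1P: c2R => _ /setD1P []. Qed.
Let fR : f \subset R. Proof. by rewrite subUset !sub1set c1R' c2R'. Qed.
Let sf : s \notin f. Proof. by rewrite !inE !(eq_sym s) negb_or c1s c2s. Qed.
Let tf : t \notin f. Proof. by rewrite !inE !(eq_sym t) negb_or c1t c2t. Qed.

Let E' := f |: (E :\ g).

Let closed_nbhd_E' u : u \notin f -> u \notin g -> closed_nbhd E' u = closed_nbhd E u.
Proof. by move=> uf ug; rewrite closed_nbhdU1 // closed_nbhdD1. Qed.

Let psi (F : {set {set 'I_n}}) := if g \in F then f |: (F :\ g) else F.
Let phi (F : {set {set 'I_n}}) := if f \in F then g |: (F :\ f) else F.

Let psiP F : pathset 3 E F s t ->
  [/\ pathset 3 E' (psi F) s t, #|psi F| = #|F| & phi (psi F) = F].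
Proof.
move=> [sFE pF]; have fF : f \notin F by apply: contra fE; apply: (subsetP sFE).
have fFg : f \notin F :\ g by apply: contra fF; apply: (subsetP (subD1set _ _)).
rewrite /psi /phi; case: ifP => gF; last first.
  rewrite (negbTE fF); split=> //; split=> //.
  apply/subsetP => e eF; rewrite setU1r // in_setD1 (subsetP sFE) // andbT.
  by apply: contraFneq gF => <-.
rewrite setU11 setU1K // setD1K //; split=> //; last by rewrite cardsU1 fFg (cardsD1 g F) gF.
split; first by apply: setUS; apply: setSD.
by apply: has_short_path_sub (subsetUr _ _) (outer_edge_removable tt tw sFE gR pF).
Qed.

Let edge_not_outer e : e \in E -> e \subset R -> e \in E :\ g.
Proof. by move=> eE eR; rewrite in_setD1 eE andbT; apply: contraNneq gR => <-. Qed.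

Let twin_graph_E' : twin_graph m E' s t.
Proof.
split.
- rewrite /two_terminal st andbT; apply: simple_graphU1 c12 (simple_graphS (subD1set E g) _).
  by case/andP: tt.
- by case: twE => _ <- _; rewrite cardsU1 in_setD1 (negbTE fE) andbF (cardsD1 g E) gE.
- by rewrite /true_twins !closed_nbhd_E'.
Qed.

Let outer_edges_E'_lt : #|outer_edges E' s| < #|outer_edges E s|.
Proof.
apply: outer_edges_lt go _ _; first by rewrite closed_nbhd_E'.
by move=> e /setU1P [-> | //]; rewrite closed_nbhd_E' // fR.
Qed.

Let stronger_E' : stronger 3 m E' s t E s t.
Proof.
have sc1 : [set s; c1] \in E :\ g.
  by apply: edge_not_outer; rewrite ?source_edge // subUset !sub1set source_in_nbhd.
have c2t' : [set c2; t] \in E :\ g.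
  apply: edge_not_outer; first by rewrite (target_edge tw).
  by rewrite subUset !sub1set (target_in_nbhd tw) andbT.
pose F0 := [set [set s; c1]; f; [set c2; t]].
apply: (@stronger_of_cancel _ _ _ _ _ _ psi phi psiP _ F0).
- split.
    by apply/subsetP => e /setUP [/set2P [] | /set1P] ->; rewrite ?setU11 ?setU1r.
  apply/short_path3P => //; exists c1, c2.
  by rewrite !mem_closed_nbhd (setUC [set t]) /F0 !inE !eqxx !orbT c12 c1t c2s.
- rewrite /phi /F0 !inE eqxx orbT => -[sF0 /(outer_edge_removable tt tw sF0 gR)].
  have sc2 : s != c2 by rewrite eq_sym.
  apply/negP; apply: contraNN (two_edges_no_short_path sc2 st c12 c1t).
  apply: has_short_path_sub; apply/subsetP => e.
  rewrite !inE => /andP [eg /orP [/eqP eg' | /andP [ef]]]; first by rewrite eg' eqxx in eg.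
  by rewrite (negbTE ef) orbF.
- rewrite card_gt0 (leq_trans (cards3_le _ _ _) hm) andbT.
  by apply/set0Pn; exists f; rewrite /F0 !inE eqxx orbT.
Qed.

Lemma swap_into_nbhd_reduction : outer_reduction m E s t.
Proof. by exists E'; split. Qed.

End SwapIntoNbhd.

Definition addif (T : finType) (c : bool) (x : T) (A : {set T}) : {set T} :=
  if c then x |: A else A.

Section Addif.
Variables (T : finType) (x y : T).
Implicit Types (A B : {set T}) (cx cy : bool).

Lemma setD1_id z A : z \notin A -> A :\ z = A.
Proof. by move=> zA; apply/setDidPl; rewrite disjoint_sym disjoints1. Qed.

Lemma addif_setD1 z A : addif (z \in A) z (A :\ z) = A.
Proof. by rewrite /addif; case: ifP => [/setD1K // | /negbT /setD1_id]. Qed.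

Lemma addif2_setD1 A : x != y -> addif (x \in A) x (addif (y \in A) y (A :\ x :\ y)) = A.
Proof.
move=> xy; have -> : (y \in A) = (y \in A :\ x) by rewrite in_setD1 eq_sym xy.
by rewrite !addif_setD1.
Qed.

Lemma addifK c z A : z \notin A -> addif c z A :\ z = A /\ #|addif c z A| = c + #|A|.
Proof. by case: c => zA; rewrite /addif ?setU1K ?cardsU1 ?zA ?setD1_id. Qed.

Lemma addif2K cx cy A : x != y -> x \notin A -> y \notin A ->
  let B := addif cx x (addif cy y A) in
  [/\ B :\ x :\ y = A, (x \in B) = cx, (y \in B) = cy & #|B| = cx + cy + #|A|].
Proof.
move=> xy xA yA /=; have yx : y != x by rewrite eq_sym.
have xyA : x \notin addif cy y A by case: cy; rewrite /addif ?in_setU1 ?negb_or ?xy.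
have [-> cB] := addifK cx xyA; have [-> cA] := addifK cy yA.
rewrite cB cA addnA; split=> //; case: cx {cB}; case: cy {cA xyA}.
all: rewrite /addif ?in_setU1 ?eqxx ?orbT //=.
all: by rewrite ?(negbTE xy) ?(negbTE yx) ?(negbTE xA) ?(negbTE yA).
Qed.

Lemma addif2S cx cy A B : A \subset B -> addif cx x (addif cy y A) \subset x |: (y |: B).
Proof.
move=> sAB; apply/subsetP => z; case: cx; case: cy; rewrite /addif !in_setU1.
all: by do ?case/orP => [-> | ]; rewrite ?orbT // => /(subsetP sAB) ->; rewrite !orbT.
Qed.

End Addif.

Section ExtendNbhd.
Variables (n m : nat) (E : {set {set 'I_n}}) (s t v c1 c2 : 'I_n) (g : {set 'I_n}).
Implicit Types (A F X : {set {set 'I_n}}) (ga gb : bool).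
Local Notation R := (closed_nbhd E s).
Local Notation h := [set c1; c2].
Local Notation a := [set s; v].
Local Notation b := [set v; t].
Local Notation hsp F := (has_short_path 3 F s t).
Hypotheses (twE : twin_graph m E s t) (hm : 2 <= m).
Hypotheses (go : g \in outer_edges E s) (vR : v \notin R).
Hypotheses (hE : h \in E) (hg : h != g) (sh : s \notin h) (th : t \notin h).

Let tt : two_terminal E s t. Proof. by case: twE. Qed.
Let tw : true_twins E s t. Proof. by case: twE. Qed.
Let st : s != t. Proof. by case/andP: tt. Qed.
Let gE : g \in E. Proof. by case/setIdP: go. Qed.
Let gR : ~~ (g \subset R). Proof. by case/setIdP: go. Qed.
Let sg : s \notin g. Proof. by case/andP: (outer_edge_avoids_terminals tt tw go). Qed.
Let tg : t \notin g. Proof. by case/andP: (outer_edge_avoids_terminals tt tw go). Qed.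
Let vs : v != s. Proof. by apply: contraNneq vR => ->; apply: source_in_nbhd. Qed.
Let vt : v != t. Proof. by apply: contraNneq vR => ->; apply: target_in_nbhd. Qed.
Let c1s : c1 != s. Proof. by apply: contraNneq sh => <-; apply: set21. Qed.
Let c2s : c2 != s. Proof. by apply: contraNneq sh => <-; apply: set22. Qed.
Let c1t : c1 != t. Proof. by apply: contraNneq th => <-; apply: set21. Qed.
Let c2t : c2 != t. Proof. by apply: contraNneq th => <-; apply: set22. Qed.
Let ta : t \notin a. Proof. by rewrite !inE negb_or (eq_sym t s) st (eq_sym t v) vt. Qed.
Let ab : a != b. Proof. by apply: contraNneq ta => ->; apply: set22. Qed.
Let gh : g != h. Proof. by rewrite eq_sym. Qed.

Let core F := F :\ g :\ h.

Let core_sub F : F \subset E -> core F \subset core E.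
Proof. by move=> sFE; rewrite !setSD. Qed.

Let ab_notin X : X \subset core E -> a \notin X /\ b \notin X.
Proof.
move=> sX; split; apply: contra vR => /(subsetP sX); rewrite !in_setD1 => /and3P [_ _ eE].
  by rewrite mem_closed_nbhd eE orbT.
by rewrite tw mem_closed_nbhd setUC eE orbT.
Qed.

Let lift ga gb X := addif ga a (addif gb b X).
Let E' := lift true true (core E).

Let liftP ga gb X : X \subset core E ->
  [/\ lift ga gb X \subset E', lift ga gb X :\ a :\ b = X, (a \in lift ga gb X) = ga,
      (b \in lift ga gb X) = gb & #|lift ga gb X| = ga + gb + #|X|].
Proof.
move=> sX; have [aX bX] := ab_notin sX.
by have [? ? ? ?] := addif2K ga gb ab aX bX; split=> //; apply: addif2S.
Qed.

Let lift_path X : hsp (lift true true X).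
Proof. by apply: (short_path_via st vs vt); rewrite /lift /addif !inE eqxx ?orbT. Qed.

Let decompose F : F = addif (g \in F) g (addif (h \in F) h (core F)).
Proof. by rewrite addif2_setD1. Qed.

Let card_decompose F : #|F| = (g \in F) + (h \in F) + #|core F|.
Proof.
have gc : g \notin core F by rewrite !in_setD1 eqxx andbF.
have hc : h \notin core F by rewrite !in_setD1 eqxx.
by have [_ _ _ <-] := addif2K (g \in F) (h \in F) gh gc hc; rewrite -decompose.
Qed.

(* If A has no short path but h |: A has, that path is s c1 c2 t or s c2 c1 t, and
   exactly one of s c1, s c2 lies in A; which one is told by the presence of c2 t. *)
Let exit A := if [set s; c1] \in A then [set s; c1] else [set s; c2].
Let exit_rest A := if [set c2; t] \in A then [set s; c1] else [set s; c2].

Let no_path_through_h A :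
  ~~ hsp A -> [set s; c1] \notin A -> [set s; c2] \notin A -> ~~ hsp (h |: A).
Proof.
move=> nA n1 n2; apply/negP => /(short_path_through_new_edge st sh th nA) [x [y [hxy _ sx _]]].
have : x \in h by rewrite hxy set21.
by case/set2P => ex; [rewrite -ex sx in n1 | rewrite -ex sx in n2].
Qed.

Let exitP A : ~~ hsp A -> hsp (h |: A) ->
  [/\ exit A \in A, ~~ hsp (h |: (A :\ exit A)) & exit_rest (A :\ exit A) = exit A].
Proof.
move=> nA pA; have [x [y [hxy xy sx yt]]] := short_path_through_new_edge st sh th nA pA.
have no_via z : z != s -> z != t -> [set s; z] \in A -> [set z; t] \notin A.
  by move=> zs zt sz; apply: contra nA; apply: short_path_via.
have nAD e : ~~ hsp (A :\ e) by apply: contra nA; apply/has_short_path_sub/subD1set.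
have t_s c : [set c; t] != [set s; c1].
  apply: contraNneq (_ : t \notin [set s; c1]) => [<- | ]; first exact: set22.
  by rewrite !inE negb_or (eq_sym t s) st (eq_sym t c1) c1t.
have : x \in h by rewrite hxy set21.
have : y \in h by rewrite hxy set22.
case/set2P => ?; case/set2P => ?; subst x y; rewrite ?eqxx // in xy.
- have n1 := contraL (no_via c1 c1s c1t) yt; have n2 := no_via c2 c2s c2t sx.
  rewrite /exit (negbTE n1) sx; split=> //.
    by apply: no_path_through_h; rewrite ?nAD ?in_setD1 ?eqxx ?(negbTE n1) ?andbF.
  by rewrite /exit_rest in_setD1 (negbTE n2) andbF.
- have n2 := contraL (no_via c2 c2s c2t) yt.
  rewrite /exit sx; split=> //.
    by apply: no_path_through_h; rewrite ?nAD ?in_setD1 ?(negbTE n2) ?andbF ?eqxx.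
  by rewrite /exit_rest in_setD1 yt t_s.
Qed.

Let core_needs_h F : pathset 3 E F s t -> ~~ hsp (core F) -> h \in F /\ hsp (h |: core F).
Proof.
move=> [sFE pF] nc; have := outer_edge_removable tt tw sFE gR pF.
rewrite -{1}(addif_setD1 h (F :\ g)) in_setD1 hg /addif.
by case: ifP => [// | _ p]; rewrite p in nc.
Qed.

(* A pathset all of whose short paths use h is sent to one routed through s v t; if it
   avoids g, the edge [exit] is dropped to keep the size. *)
Let psi F := if hsp (core F) then lift (g \in F) (h \in F) (core F)
  else lift true true (if g \in F then core F else core F :\ exit (core F)).

Let phi Y := let X := Y :\ a :\ b in
  if hsp X then addif (a \in Y) g (addif (b \in Y) h X)
  else if hsp (h |: X) then g |: (h |: X) else h |: (exit_rest X |: X).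

Let psiP F : pathset 3 E F s t ->
  [/\ pathset 3 E' (psi F) s t, #|psi F| = #|F| & phi (psi F) = F].
Proof.
move=> pF; have [sFE _] := pF; have sc := core_sub sFE.
rewrite /psi /phi; case: ifP => pc.
  have [sE' rem -> -> cY] := liftP (g \in F) (h \in F) sc.
  rewrite rem pc cY -card_decompose -decompose; split=> //; split=> //.
  apply: has_short_path_sub pc; rewrite -{1}rem.
  exact: subset_trans (subD1set _ _) (subD1set _ _).
have [hF phc] := core_needs_h pF (negbT pc).
case: ifP => gF.
  have [sE' -> _ _ cY] := liftP true true sc.
  rewrite pc phc cY (card_decompose F) gF hF.
  by split; [split=> //; apply: lift_path | | rewrite [RHS]decompose gF hF].
have [xc nX xr] := exitP (negbT pc) phc.
have [sE' -> _ _ cY] :=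
  liftP true true (subset_trans (subD1set (core F) (exit (core F))) sc).
have -> : hsp (core F :\ exit (core F)) = false.
  by apply/negbTE; apply: contra (negbT pc); apply/has_short_path_sub/subD1set.
rewrite (negbTE nX) xr setD1K //; split.
- by split=> //; apply: lift_path.
- by rewrite cY (card_decompose F) gF hF (cardsD1 (exit (core F)) (core F)) xc.
- by rewrite [RHS]decompose gF hF.
Qed.

Let closed_nbhd_E' : closed_nbhd E' s = v |: R /\ closed_nbhd E' t = v |: R.
Proof.
have sb : s \notin b by rewrite !inE negb_or eq_sym vs.
rewrite /E' /lift /addif closed_nbhd_edgeU1 closed_nbhdU1 // !closed_nbhdD1 //.
by rewrite closed_nbhdU1 // (setUC [set v] [set t]) closed_nbhd_edgeU1 !closed_nbhdD1 // -tw.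
Qed.

Let twin_graph_E' : twin_graph m E' s t.
Proof.
have [nE's nE't] := closed_nbhd_E'; split.
- rewrite /two_terminal st andbT /E' /lift /addif; apply: simple_graphU1; first by rewrite eq_sym.
  apply: simple_graphU1 vt _; apply: simple_graphS (subset_trans (subD1set _ _) (subD1set _ _)) _.
  by case/andP: tt.
- have [_ _ _ _ ->] := liftP true true (subxx (core E)).
  by case: twE => _ <- _; rewrite (card_decompose E) gE hE.
- by rewrite /true_twins nE's nE't.
Qed.

Let outer_edges_E'_lt : #|outer_edges E' s| < #|outer_edges E s|.
Proof.
have [nE's _] := closed_nbhd_E'.
apply: outer_edges_lt go _ _; first by rewrite nE's subsetUr.
move=> e; rewrite nE's /E' /lift /addif !in_setU1 => /orP [/eqP -> | /orP [/eqP -> | ec]].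
- by rewrite subUset !sub1set setU11 setU1r ?source_in_nbhd.
- by rewrite subUset !sub1set setU11 setU1r ?(target_in_nbhd tw).
- by move: ec; rewrite in_setD1 => /andP [_].
Qed.

Let stronger_E' : stronger 3 m E' s t E s t.
Proof.
pose F0 := lift true true set0.
have [F0E' rem0 _ _ cF0] := liftP true true (sub0set (core E)).
apply: (@stronger_of_cancel _ _ _ _ _ _ psi phi psiP _ F0).
- by split=> //; apply: lift_path.
- have T0 : ~~ hsp [set h; [set s; c2]].
    apply: no_short_path_to_isolated => // e /set2P [] -> //.
    by rewrite !inE negb_or (eq_sym t s) st (eq_sym t c2) c2t.
  have nsub X : X \subset [set h; [set s; c2]] -> hsp X = false.
    by move=> sX; apply/negbTE; apply: contra T0; apply: has_short_path_sub.
  rewrite /phi rem0 !nsub ?sub0set ?setU0 ?subsetUl // => -[_].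
  by rewrite /exit_rest inE; apply/negP.
- by rewrite cF0 cards0 hm.
Qed.

Lemma extend_nbhd_reduction : outer_reduction m E s t.
Proof. by exists E'; split. Qed.

End ExtendNbhd.

Lemma card_inner_edges n (E : {set {set 'I_n}}) (R : {set 'I_n}) :
  simple_graph E -> #|[set e in E | e \subset R]| <= 'C(#|R|, 2).
Proof.
move=> /forallP sE; rewrite -cards_draws; apply: subset_leq_card; apply/subsetP => e.
by rewrite !inE => /andP [eE ->]; have := sE e; rewrite eE.
Qed.

Lemma card_inner_outer_edges n (E : {set {set 'I_n}}) (s : 'I_n) :
  #|E| = #|[set e in E | e \subset closed_nbhd E s]| + #|outer_edges E s|.
Proof.
rewrite -(cardsID [set e : {set 'I_n} | e \subset closed_nbhd E s] E).
by congr (_ + _); apply: eq_card => e; rewrite !inE andbC.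
Qed.

Lemma exists_edge_avoiding_terminals n m (E : {set {set 'I_n}}) (s t : 'I_n) g :
  twin_graph m E s t -> 5 <= m -> g \in outer_edges E s ->
  {in closed_nbhd E s :\ s :\ t &, forall c1 c2, c1 != c2 -> [set c1; c2] \in E} ->
  exists c1 c2, [/\ [set c1; c2] \in E, [set c1; c2] != g,
    s \notin [set c1; c2] & t \notin [set c1; c2]].
Proof.
(* Either R \ {s,t} has two vertices, or |R| <= 3: then at most 3 edges lie inside R
   and m >= 5 leaves a second outer edge. *)
move=> [tt cE tw] hm go full; have sE : simple_graph E by case/andP: tt.
set R := closed_nbhd E s.
case: (ltnP 1 #|R :\ s :\ t|) => [/card_gt1P [c1 [c2 [c1R c2R c12]]] | small].
  have inR c : c \in R :\ s :\ t -> [/\ c \in R, c != s & c != t].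
    by rewrite !in_setD1 => /and3P [].
  have [c1R' c1s c1t] := inR _ c1R; have [c2R' c2s c2t] := inR _ c2R.
  exists c1, c2; split; first exact: full.
  - by case/setIdP: go => _; apply: contraNneq => <-; rewrite subUset !sub1set c1R'.
  - by rewrite !inE negb_or !(eq_sym s) c1s.
  - by rewrite !inE negb_or !(eq_sym t) c1t.
have : 2 <= #|outer_edges E s|.
  have cR : #|R| <= 3.
    rewrite (cardsD1 s R) (cardsD1 t (R :\ s)).
    by apply: leq_trans (leq_add (leq_b1 _) (leq_add (leq_b1 _) small)) _.
  have := leq_trans (card_inner_edges R sE) (leq_bin2l 2 cR : _ <= 3).
  by rewrite (card_inner_outer_edges E s) -/R in cE; lia.
rewrite (cardsD1 g) go => /card_gt0P [g2 /setD1P [g2g g2o]].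
have /cards2P [c1 [c2 [_ eg2]]] : #|g2| == 2.
  by case/setIdP: g2o => g2E _; move/forallP: sE => /(_ g2); rewrite g2E.
have /andP [sg2 tg2] := outer_edge_avoids_terminals tt tw g2o.
by exists c1, c2; rewrite -eg2; split=> //; case/setIdP: g2o.
Qed.

Lemma outer_reduction_step n m (E : {set {set 'I_n}}) (s t : 'I_n) :
  twin_graph m E s t -> 5 <= m -> outer_edges E s != set0 -> outer_reduction m E s t.
Proof.
move=> twE hm /set0Pn [g go]; have /setIdP [_ /subsetPn [v _ vR]] := go.
pose Rst := closed_nbhd E s :\ s :\ t.
have [/existsP [c1 /existsP [c2 /and4P [c1R c2R c12 fE]]] | full] :=
  boolP [exists c1, exists c2, [&& c1 \in Rst, c2 \in Rst, c1 != c2 & [set c1; c2] \notin E]].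
  exact: swap_into_nbhd_reduction twE (leq_trans _ hm) go c1R c2R c12 fE.
have [c1 [c2 [hE hg sh th]]] : exists c1 c2, [/\ [set c1; c2] \in E, [set c1; c2] != g,
    s \notin [set c1; c2] & t \notin [set c1; c2]].
  apply: exists_edge_avoiding_terminals twE hm go _ => c1 c2 c1R c2R c12.
  apply: contraNT full => fE; apply/existsP; exists c1; apply/existsP; exists c2.
  by rewrite c1R c2R c12.
exact: extend_nbhd_reduction twE (leq_trans _ hm) go vR hE hg sh th.
Qed.

Lemma reach_no_outer_edges n m (E : {set {set 'I_n}}) (s t : 'I_n) :
  twin_graph m E s t -> 5 <= m -> outer_edges E s != set0 ->
  exists EH, [/\ twin_graph m EH s t, outer_edges EH s = set0 & stronger 3 m EH s t E s t].
Proof.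
move=> twE hm; move: {2}#|outer_edges E s| (leqnn #|outer_edges E s|) => k.
elim: k E twE => [|k IH] E twE leE ho; first by move: ho leE; rewrite -card_gt0; lia.
have [E1 [twE1 lt1 st1]] := outer_reduction_step twE hm ho.
have [oE1 | ho1] := eqVneq (outer_edges E1 s) set0; first by exists E1.
have [EH [twEH oH sH]] := IH E1 twE1 (leq_trans lt1 leE) ho1.
by exists EH; split=> //; apply: stronger_trans sH st1.
Qed.

Theorem lemma9 (n m : nat) (hn : 5 <= n) (hm : 5 <= m)
    (EG : {set {set 'I_n}}) (s t : 'I_n) :
  two_terminal EG s t -> #|EG| = m ->
  true_twins EG s t ->
  (exists e, irrelevant 3 EG s t e) ->
  exists (EH : {set {set 'I_n}}) (sH tH : 'I_n),
    [/\ two_terminal EH sH tH, #|EH| = m, true_twins EH sH tH,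
        (forall e, ~ irrelevant 3 EH sH tH e)
      & stronger 3 m EH sH tH EG s t].
Proof.
move=> tt cE tw [e irr].
have ho : outer_edges EG s != set0 by apply/set0Pn; exists e; apply: irrelevant_outer irr.
have [EH [[ttH cH twH] oH sH]] := reach_no_outer_edges (And3 tt cE tw) hm ho.
exists EH, s, t; split=> // e' /(irrelevant_outer ttH twH).
by rewrite oH inE.
Qed.
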